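(* Let $d\geq 1$, let $\delta$ be a sufficiently small positive real number, and let $P$ be a large positive integer. Then $$\int_{\mathfrak{M}}F(\alpha)\,d\alpha=P^{d+1}\mathfrak{S}(P^{\delta})J(P^{\delta})+O(P^{d+5\delta}),$$ where $$\mathfrak{S}(Q)=\sum_{q\leq Q}\sum_{\substack{a=1\\(a,q)=1}}^{q}q^{-2d-1}S(q,a),\qquad J(\mu)=\int_{|\gamma|<\mu}\left(\int_{[0,1]^{2d+1}}e(\gamma f(\xi))\,d\xi\right)d\gamma.$$
   Context: For an integer $d\geq 1$ define $f_d$: if $d=2k$ ($k\geq1$), $f_d(x_1,\ldots,x_d)=\prod_{i=1}^{k}(x_{2i-1}^2+x_{2i}^2)$; if $d=2k+1$ ($k\geq 0$), $f_d(x_1,\ldots,x_d)=x_1\prod_{i=1}^{k}(x_{2i}^2+x_{2i+1}^2)$. Let $f(x_1,\ldots,x_{2d+1})=f_d(x_1,\ldots,x_d)+f_d(x_{d+1},\ldots,x_{2d})-x_{2d+1}^d$. Let $e(\alpha)=e^{2\pi i\alpha}$, $B=\{1,\ldots,P\}^{2d+1}$, $F(\alpha)=\sum_{{\bf x}\in B}e(\alpha f({\bf x}))$, and $S(q,a)=\sum_{{\bf z}\bmod q}e\left(\frac{a}{q}f({\bf z})\right)$ (sum over ${\bf z}\in\{1,\ldots,q\}^{2d+1}$). For integers $1\leq q\leq P^{\delta}$, $1\leq a\leq q$, $(a,q)=1$, let $\mathfrak{M}(q,a)=\{\alpha\in\mathbb{R}:|\alpha-a/q|\leq P^{\delta-d}\}$,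 and let $\mathfrak{M}$ be the union of these sets. The sum over $q\leq Q$ is over positive integers $q$. The implied constant in $O$ depends at most on $d$. *)

From Stdlib Require Import Reals Arith Classical ClassicalEpsilon.
From Coquelicot Require Import Coquelicot.
Open Scope R_scope.

Definition CRInt (g : R -> C) (a b : R) : C :=
  @RInt C_R_CompleteNormedModule g a b.

Definition ee (alpha : R) : C := (cos (2 * PI * alpha), sin (2 * PI * alpha)).

(* Points of R^n are represented as x : nat -> R, coordinates x 1, ..., x n. *)
Definition upd (x : nat -> R) (i : nat) (t : R) : nat -> R :=
  fun j => if Nat.eqb j i then t else x j.

Fixpoint prodR (k : nat) (g : nat -> R) : R :=
  match k with O => 1 | S k' => prodR k' g * g k end.

(* f_d evaluated at (x_{s+1}, ..., x_{s+d}) *)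
Definition fd (d s : nat) (x : nat -> R) : R :=
  if Nat.even d then
    prodR (Nat.div2 d) (fun i => x (s + (2*i-1))%nat ^ 2 + x (s + 2*i)%nat ^ 2)
  else
    x (s + 1)%nat *
    prodR (Nat.div2 d) (fun i => x (s + 2*i)%nat ^ 2 + x (s + (2*i+1))%nat ^ 2).

Definition ff (d : nat) (x : nat -> R) : R :=
  fd d 0 x + fd d d x - x (2*d+1)%nat ^ d.

Fixpoint sumC (N : nat) (h : nat -> C) : C :=
  match N with O => 0%C | S N' => Cplus (sumC N' h) (h N) end.

Fixpoint boxsum (N n : nat) (g : (nat -> R) -> C) : C :=
  match n with
  | O => g (fun _ => 0)
  | S n' => sumC N (fun t => boxsum N n' (fun x => g (upd x (S n') (INR t))))
  end.

Fixpoint cubeint (n : nat) (g : (nat -> R) -> C) : C :=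
  match n with
  | O => g (fun _ => 0)
  | S n' => CRInt (fun t => cubeint n' (fun x => g (upd x (S n') t))) 0 1
  end.

Definition FF (d P : nat) (alpha : R) : C :=
  boxsum P (2*d+1) (fun x => ee (alpha * ff d x)).

(* S(q,a) = sum_{z mod q} e(a/q f(z)),  z in {1..q}^{2d+1} *)
Definition SS (d q a : nat) : C :=
  boxsum q (2*d+1) (fun z => ee (INR a / INR q * ff d z)).

Definition frakS (d : nat) (Q : R) : C :=
  sumC (Z.to_nat (up Q)) (fun q =>
    if Rle_dec (INR q) Q then
      sumC q (fun a =>
        if Nat.eqb (Nat.gcd a q) 1 then
          Cmult (RtoC (/ (INR q ^ (2*d+1)))) (SS d q a)
        else 0%C)
    else 0%C).

Definition JJ (d : nat) (mu : R) : C :=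
  CRInt (fun gamma => cubeint (2*d+1) (fun xi => ee (gamma * ff d xi))) (- mu) mu.

Definition in_major (d P : nat) (delta alpha : R) : Prop :=
  exists q a : nat, (1 <= q)%nat /\ INR q <= Rpower (INR P) delta /\
    (1 <= a <= q)%nat /\ Nat.gcd a q = 1%nat /\
    Rabs (alpha - INR a / INR q) <= Rpower (INR P) (delta - INR d).

Definition major_ind (d P : nat) (delta alpha : R) : R :=
  if excluded_middle_informative (in_major d P delta alpha) then 1 else 0.

(* int_M F(alpha) d alpha.  M is contained in [-1 - P^(delta-d), 2 + P^(delta-d)]
   (all centres a/q lie in (0,1]), so this is the integral over M. *)
Definition major_int (d P : nat) (delta : R) : C :=
  let r := Rpower (INR P) (delta - INR d) in
  CRInt (fun alpha => Cmult (RtoC (major_ind d P delta alpha)) (FF d P alpha))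
        (-1 - r) (2 + r).

From Stdlib Require Import Reals Arith.
From Coquelicot Require Import Coquelicot.
From Stdlib Require Import Lia Lra ZArith Psatz FunctionalExtensionality ClassicalEpsilon.
Open Scope R_scope.

(* Near a/q, F(a/q + beta) = sum_x e(a/q f(x)) e(P^d beta f(x/P)).  The first factor
   depends on x only modulo q and the second is Lipschitz in x/P, so grouping x by its
   residue modulo q turns F into S(q,a) times Riemann sums, one coordinate at a time,
   for I(gamma) = int_{[0,1]^{2d+1}} e(gamma f) at gamma = P^d beta.  Each coordinate
   costs O(q (1 + |gamma|)), so F(a/q + beta) = (P/q)^{2d+1} S(q,a) I(P^d beta)
   + O(q P^{2d} (1 + P^d |beta|)).  Integrating over |beta| <= P^(delta-d) and putting
   gamma = P^d beta gives P^{d+1} q^{-2d-1} S(q,a) J(P^delta) + O(P^{d+3 delta}).  For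
   delta < 1/6 the arcs are pairwise disjoint, so the integral over the major arcs is
   the sum over its at most P^{2 delta} arcs, and the errors add up to O(P^{d+5 delta}). *)

(** * Complex numbers and the character [ee] *)

Lemma Cmod_le_abs_fst_snd (z : C) : Cmod z <= Rabs (fst z) + Rabs (snd z).
Proof.
  pose proof (Rabs_pos (fst z)); pose proof (Rabs_pos (snd z)).
  unfold Cmod. rewrite <- (sqrt_Rsqr (Rabs (fst z) + Rabs (snd z))) by lra.
  apply sqrt_le_1_alt. unfold Rsqr.
  rewrite <- (pow2_abs (fst z)), <- (pow2_abs (snd z)). nra.
Qed.

Lemma Cminus_diag (z : C) : (z - z)%C = RtoC 0.
Proof. ring. Qed.

Lemma Cmult_minus_distr_l (a b c : C) : (a * (b - c))%C = (a * b - a * c)%C.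
Proof. ring. Qed.

Lemma Cmod_sub_triangle (a b c : C) : Cmod (a - c) <= Cmod (a - b) + Cmod (b - c).
Proof. replace (a - c)%C with ((a - b) + (b - c))%C by ring. apply Cmod_triangle. Qed.

Lemma Cmod_RtoC_mult (r : R) (z : C) : Cmod (RtoC r * z) = Rabs r * Cmod z.
Proof. rewrite Cmod_mult, Cmod_R. reflexivity. Qed.

Lemma Cmod_ee (u : R) : Cmod (ee u) = 1.
Proof.
  unfold ee, Cmod; simpl. pose proof (sin2_cos2 (2 * PI * u)) as E. unfold Rsqr in E.
  match goal with |- sqrt ?x = 1 => replace x with 1 by lra end. apply sqrt_1.
Qed.

Lemma cos_lipschitz (a b : R) : Rabs (cos a - cos b) <= Rabs (a - b).
Proof.
  destruct (MVT_abs cos (fun c => - sin c) b a) as [c [-> _]].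
  { intros; apply derivable_pt_lim_cos. }
  rewrite Rabs_Ropp. pose proof (SIN_bound c).
  assert (Rabs (sin c) <= 1) by (apply Rabs_le; lra).
  pose proof (Rabs_pos (a - b)). nra.
Qed.

Lemma sin_lipschitz (a b : R) : Rabs (sin a - sin b) <= Rabs (a - b).
Proof.
  destruct (MVT_abs sin cos b a) as [c [-> _]].
  { intros; apply derivable_pt_lim_sin. }
  pose proof (COS_bound c).
  assert (Rabs (cos c) <= 1) by (apply Rabs_le; lra).
  pose proof (Rabs_pos (a - b)). nra.
Qed.

Lemma ee_lipschitz (u v : R) : Cmod (ee u - ee v) <= 4 * PI * Rabs (u - v).
Proof.
  eapply Rle_trans. apply Cmod_le_abs_fst_snd. unfold ee; simpl.
  pose proof (cos_lipschitz (2 * PI * u) (2 * PI * v)).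
  pose proof (sin_lipschitz (2 * PI * u) (2 * PI * v)).
  replace (2 * PI * u - 2 * PI * v) with (2 * PI * (u - v)) in * by ring.
  rewrite Rabs_mult, (Rabs_right (2 * PI)) in * by (pose proof PI_RGT_0; lra).
  unfold Rminus in *. lra.
Qed.

Lemma ee_mult_lipschitz (g1 g2 f : R) :
  Cmod (ee (g1 * f) - ee (g2 * f)) <= 4 * PI * Rabs f * Rabs (g1 - g2).
Proof.
  eapply Rle_trans. apply ee_lipschitz.
  replace (g1 * f - g2 * f) with (f * (g1 - g2)) by ring. rewrite Rabs_mult. lra.
Qed.

Lemma ee_plus (u v : R) : ee (u + v) = (ee u * ee v)%C.
Proof.
  unfold ee. replace (2 * PI * (u + v)) with (2 * PI * u + 2 * PI * v) by ring.
  rewrite cos_plus, sin_plus. apply injective_projections; simpl; ring.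
Qed.

Lemma ee_plus_INR (u : R) (k : nat) : ee (u + INR k) = ee u.
Proof.
  unfold ee. replace (2 * PI * (u + INR k)) with (2 * PI * u + 2 * INR k * PI) by ring.
  rewrite cos_period, sin_period. reflexivity.
Qed.

Lemma ee_plus_IZR (u : R) (k : Z) : ee (u + IZR k) = ee u.
Proof.
  destruct (Z_le_gt_dec 0 k).
  - rewrite <- (Z2Nat.id k), <- INR_IZR_INZ by lia. apply ee_plus_INR.
  - rewrite <- (ee_plus_INR (u + IZR k) (Z.to_nat (- k))). f_equal.
    rewrite INR_IZR_INZ, Z2Nat.id, opp_IZR by lia. ring.
Qed.

(** * Finite sums *)

Lemma sumC_ext N (h1 h2 : nat -> C) :
  (forall t, (1 <= t <= N)%nat -> h1 t = h2 t) -> sumC N h1 = sumC N h2.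
Proof.
  induction N as [|N IH]; simpl; intros H; auto.
  rewrite IH by (intros; apply H; lia). rewrite H by lia. reflexivity.
Qed.

Lemma sumC_plus N (h1 h2 : nat -> C) :
  sumC N (fun t => h1 t + h2 t)%C = (sumC N h1 + sumC N h2)%C.
Proof. induction N; simpl. ring. rewrite IHN. ring. Qed.

Lemma sumC_minus N (h1 h2 : nat -> C) :
  sumC N (fun t => h1 t - h2 t)%C = (sumC N h1 - sumC N h2)%C.
Proof. induction N; simpl. ring. rewrite IHN. ring. Qed.

Lemma sumC_scal N (c : C) (h : nat -> C) : sumC N (fun t => c * h t)%C = (c * sumC N h)%C.
Proof. induction N; simpl. ring. rewrite IHN. ring. Qed.

Lemma sumC_0 N : sumC N (fun _ => RtoC 0) = RtoC 0.
Proof. induction N; simpl; auto. rewrite IHN. ring. Qed.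

Lemma sumC_eq0 N (h : nat -> C) :
  (forall k, (1 <= k <= N)%nat -> h k = RtoC 0) -> sumC N h = RtoC 0.
Proof. intros. rewrite (sumC_ext N h (fun _ => RtoC 0)) by auto. apply sumC_0. Qed.

Lemma sumC_single N (h : nat -> C) k0 : (1 <= k0 <= N)%nat ->
  (forall k, (1 <= k <= N)%nat -> k <> k0 -> h k = RtoC 0) -> sumC N h = h k0.
Proof.
  induction N as [|N IH]; intros Hk H; [lia|]. cbn [sumC].
  destruct (Nat.eq_dec k0 (S N)) as [->|].
  - rewrite sumC_eq0 by (intros; apply H; lia). ring.
  - rewrite IH; [| lia | intros; apply H; lia]. rewrite (H (S N)) by lia. ring.
Qed.

Lemma Cmod_sumC_le N (h : nat -> C) B :
  (forall t, (1 <= t <= N)%nat -> Cmod (h t) <= B) -> Cmod (sumC N h) <= INR N * B.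
Proof.
  induction N as [|N IH]; cbn [sumC]; intros H.
  - rewrite Cmod_0. simpl; lra.
  - eapply Rle_trans. apply Cmod_triangle. rewrite S_INR.
    assert (Cmod (sumC N h) <= INR N * B) by (apply IH; intros; apply H; lia).
    assert (Cmod (h (S N)) <= B) by (apply H; lia). lra.
Qed.

Lemma sumC_add a b (h : nat -> C) :
  sumC (a + b) h = (sumC a h + sumC b (fun i => h (a + i)%nat))%C.
Proof.
  induction b; simpl. rewrite Nat.add_0_r. ring.
  rewrite Nat.add_succ_r. simpl. rewrite IHb. ring.
Qed.

Lemma sumC_comm N M (h : nat -> nat -> C) :
  sumC N (fun i => sumC M (fun j => h i j)) = sumC M (fun j => sumC N (fun i => h i j)).
Proof.
  induction N; simpl. rewrite sumC_0. auto.
  rewrite IHN, <- sumC_plus. auto.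
Qed.

(* [sumC0 M g] sums over 0 <= y < M, whereas [sumC] starts at 1. *)
Fixpoint sumC0 (M : nat) (g : nat -> C) : C :=
  match M with O => RtoC 0 | S M' => (sumC0 M' g + g M')%C end.

Lemma sumC0_ext M (g1 g2 : nat -> C) :
  (forall y, (y < M)%nat -> g1 y = g2 y) -> sumC0 M g1 = sumC0 M g2.
Proof.
  induction M; simpl; intros H; auto.
  rewrite IHM by (intros; apply H; lia). rewrite H by lia. reflexivity.
Qed.

Lemma sumC0_sumC_comm M N (h : nat -> nat -> C) :
  sumC0 M (fun y => sumC N (fun s => h y s)) = sumC N (fun s => sumC0 M (fun y => h y s)).
Proof.
  induction M; simpl. rewrite sumC_0. auto.
  rewrite IHM, <- sumC_plus. auto.
Qed.

Lemma sumC_mul_blocks q M (w : nat -> C) :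
  sumC (q * M) w = sumC0 M (fun y => sumC q (fun s => w (q * y + s)%nat)).
Proof.
  induction M; simpl. rewrite Nat.mul_0_r. auto.
  replace (q * S M)%nat with (q * M + q)%nat by lia. rewrite sumC_add, IHM. auto.
Qed.

(** * Lattice points and box sums *)

Lemma upd_upd_same u j a b : upd (upd u j a) j b = upd u j b.
Proof. apply functional_extensionality; intro i; unfold upd. destruct (Nat.eqb i j); auto. Qed.

Lemma upd_comm u i j a b : i <> j -> upd (upd u i a) j b = upd (upd u j b) i a.
Proof.
  intro H. apply functional_extensionality; intro k; unfold upd.
  destruct (Nat.eqb_spec k j), (Nat.eqb_spec k i); subst; congruence.
Qed.

Lemma upd_eq u j a : upd u j a j = a.
Proof. unfold upd. rewrite Nat.eqb_refl. auto. Qed.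

Lemma upd_neq u j a i : i <> j -> upd u j a i = u i.
Proof. intro H. unfold upd. destruct (Nat.eqb_spec i j); congruence. Qed.

Definition nat_point (x : nat -> R) := forall j, exists k : nat, x j = INR k.

Lemma nat_point_0 : nat_point (fun _ => 0).
Proof. intro j. exists 0%nat. reflexivity. Qed.

Lemma nat_point_upd x j k : nat_point x -> nat_point (upd x j (INR k)).
Proof. intros H i. unfold upd. destruct (Nat.eqb i j); [exists k; auto | apply H]. Qed.

Definition in_nat_box (N : nat) (x : nat -> R) :=
  forall j, exists k : nat, (k <= N)%nat /\ x j = INR k.

Lemma in_nat_box_nat_point N x : in_nat_box N x -> nat_point x.
Proof. intros H j. destruct (H j) as [k [_ E]]. exists k. exact E. Qed.

Lemma boxsum_ext N m : forall (g1 g2 : (nat -> R) -> C),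
  (forall x, nat_point x -> g1 x = g2 x) -> boxsum N m g1 = boxsum N m g2.
Proof.
  induction m; simpl; intros g1 g2 H.
  - apply H, nat_point_0.
  - apply sumC_ext. intros t _. apply IHm. intros; apply H, nat_point_upd; auto.
Qed.

Lemma boxsum_minus N m : forall (g1 g2 : (nat -> R) -> C),
  boxsum N m (fun x => g1 x - g2 x)%C = (boxsum N m g1 - boxsum N m g2)%C.
Proof. induction m; simpl; intros; auto. rewrite <- sumC_minus. apply sumC_ext. intros; apply IHm. Qed.

Lemma boxsum_scal N m : forall (c : C) (g : (nat -> R) -> C),
  boxsum N m (fun x => c * g x)%C = (c * boxsum N m g)%C.
Proof. induction m; simpl; intros; auto. rewrite <- sumC_scal. apply sumC_ext. intros; apply IHm. Qed.

Lemma boxsum_sumC N m : forall M (h : nat -> (nat -> R) -> C),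
  boxsum N m (fun x => sumC M (fun t => h t x)) = sumC M (fun t => boxsum N m (h t)).
Proof.
  induction m; simpl; intros; auto.
  rewrite sumC_comm. apply sumC_ext. intros. apply IHm.
Qed.

Lemma Cmod_boxsum_le N m : forall (g : (nat -> R) -> C) B,
  (forall x, in_nat_box N x -> Cmod (g x) <= B) -> Cmod (boxsum N m g) <= INR N ^ m * B.
Proof.
  induction m; simpl; intros g B H.
  - rewrite Rmult_1_l. apply H. intro j. exists 0%nat. split; [lia | auto].
  - eapply Rle_trans. apply Cmod_sumC_le. intros t Ht. apply IHm. intros x Hx. apply H.
    intro i. unfold upd. destruct (Nat.eqb i (S m)); [exists t; split; [lia | auto] | apply Hx].
    lra.
Qed.

(** * Riemann integrals of complex-valued functions *)

Lemma CRInt_ext (f g : R -> C) a b :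
  (forall x, Rmin a b < x < Rmax a b -> f x = g x) -> CRInt f a b = CRInt g a b.
Proof. intros. apply (RInt_ext (V := C_R_CompleteNormedModule)). auto. Qed.

Lemma CRInt_plus (f g : R -> C) a b : ex_RInt f a b -> ex_RInt g a b ->
  CRInt (fun x => f x + g x)%C a b = (CRInt f a b + CRInt g a b)%C.
Proof. intros. apply (RInt_plus (V := C_R_CompleteNormedModule)); auto. Qed.

Lemma CRInt_minus (f g : R -> C) a b : ex_RInt f a b -> ex_RInt g a b ->
  CRInt (fun x => f x - g x)%C a b = (CRInt f a b - CRInt g a b)%C.
Proof. intros. apply (RInt_minus (V := C_R_CompleteNormedModule)); auto. Qed.

Lemma CRInt_Chasles (f : R -> C) a b c : ex_RInt f a b -> ex_RInt f b c ->
  CRInt f a c = (CRInt f a b + CRInt f b c)%C.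
Proof. intros. symmetry. apply (RInt_Chasles (V := C_R_CompleteNormedModule)); auto. Qed.

Lemma scal_RtoC (r : R) (c : C) : @scal R_AbsRing C_R_NormedModule r c = (RtoC r * c)%C.
Proof.
  destruct c as [c1 c2]. apply injective_projections; simpl;
    unfold scal; simpl; unfold mult; simpl; ring.
Qed.

Lemma CRInt_comp_lin (f : R -> C) u v a b : ex_RInt f (u * a + v) (u * b + v) ->
  CRInt (fun y => RtoC u * f (u * y + v)%R)%C a b = CRInt f (u * a + v) (u * b + v).
Proof.
  intros H. rewrite <- (RInt_comp_lin (V := C_R_CompleteNormedModule)) by exact H.
  apply CRInt_ext. intros. symmetry. apply scal_RtoC.
Qed.

Lemma CRInt_const (c : C) a b : CRInt (fun _ => c) a b = (RtoC (b - a) * c)%C.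
Proof. unfold CRInt. rewrite (RInt_const (V := C_R_CompleteNormedModule)). apply scal_RtoC. Qed.

Lemma Cmod_CRInt_le (f : R -> C) a b M : a <= b -> ex_RInt f a b ->
  (forall x, a <= x <= b -> Cmod (f x) <= M) -> Cmod (CRInt f a b) <= (b - a) * M.
Proof.
  intros Hab Hf H. rewrite Cmod_norm.
  apply (norm_RInt_le_const (V := C_R_NormedModule) f a b); auto.
  - intros; rewrite <- Cmod_norm; auto.
  - apply (RInt_correct (V := C_R_CompleteNormedModule)). auto.
Qed.

Lemma is_RInt_Cmult (f : R -> C) a b (c I : C) : is_RInt (V := C_R_NormedModule) f a b I ->
  is_RInt (V := C_R_NormedModule) (fun x => c * f x)%C a b (c * I)%C.
Proof.
  intro H.
  assert (H1 : is_RInt (V := R_NormedModule) (fun t => fst (f t)) a b (fst I))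
    by exact (is_RInt_fct_extend_fst (U := R_NormedModule) (V := R_NormedModule) f a b I H).
  assert (H2 : is_RInt (V := R_NormedModule) (fun t => snd (f t)) a b (snd I))
    by exact (is_RInt_fct_extend_snd (U := R_NormedModule) (V := R_NormedModule) f a b I H).
  destruct c as [c1 c2], I as [i1 i2]. simpl in *.
  replace ((c1, c2) * (i1, i2))%C with (c1 * i1 - c2 * i2, c1 * i2 + c2 * i1)
    by (apply injective_projections; simpl; ring).
  apply (is_RInt_fct_extend_pair (U := R_NormedModule) (V := R_NormedModule)).
  - eapply is_RInt_ext. 2: apply (is_RInt_minus (V := R_NormedModule));
      [apply (is_RInt_scal _ _ _ c1 _ H1) | apply (is_RInt_scal _ _ _ c2 _ H2)].
    intros; simpl. unfold minus, plus, opp, scal; simpl. unfold mult; simpl. ring.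
  - eapply is_RInt_ext. 2: apply (is_RInt_plus (V := R_NormedModule));
      [apply (is_RInt_scal _ _ _ c1 _ H2) | apply (is_RInt_scal _ _ _ c2 _ H1)].
    intros; simpl. unfold plus, scal; simpl. unfold mult; simpl. ring.
Qed.

Lemma ex_RInt_Cmult (f : R -> C) a b (c : C) :
  ex_RInt f a b -> ex_RInt (fun x => c * f x)%C a b.
Proof. intros [I H]. exists (c * I)%C. apply is_RInt_Cmult. exact H. Qed.

Lemma CRInt_Cmult (f : R -> C) a b (c : C) :
  ex_RInt f a b -> CRInt (fun x => c * f x)%C a b = (c * CRInt f a b)%C.
Proof.
  intros Hf. apply (is_RInt_unique (V := C_R_CompleteNormedModule)).
  apply is_RInt_Cmult, (RInt_correct (V := C_R_CompleteNormedModule)), Hf.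
Qed.

Lemma CRInt_shift (f : R -> C) c a b : ex_RInt f (c + a) (c + b) ->
  CRInt f (c + a) (c + b) = CRInt (fun y => f (c + y)) a b.
Proof.
  intros H. transitivity (CRInt f (1 * a + c) (1 * b + c)).
  { now rewrite !Rmult_1_l, !(Rplus_comm _ c). }
  rewrite <- CRInt_comp_lin by (now rewrite !Rmult_1_l, !(Rplus_comm _ c)).
  apply CRInt_ext. intros. now rewrite Cmult_1_l, Rmult_1_l, Rplus_comm.
Qed.

Lemma CRInt_scale (f : R -> C) u a b : ex_RInt f (u * a) (u * b) ->
  ex_RInt (fun y => f (u * y)) a b ->
  CRInt f (u * a) (u * b) = (RtoC u * CRInt (fun y => f (u * y)%R) a b)%C.
Proof.
  intros H1 H2. transitivity (CRInt f (u * a + 0) (u * b + 0)).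
  { now rewrite !Rplus_0_r. }
  rewrite <- CRInt_comp_lin by (now rewrite !Rplus_0_r).
  rewrite <- CRInt_Cmult by exact H2.
  apply CRInt_ext. intros. now rewrite Rplus_0_r.
Qed.

Lemma CRInt_sumC n (h : nat -> R -> C) a b :
  (forall k, (1 <= k <= n)%nat -> ex_RInt (h k) a b) ->
  ex_RInt (fun x => sumC n (fun k => h k x)) a b /\
  CRInt (fun x => sumC n (fun k => h k x)) a b = sumC n (fun k => CRInt (h k) a b).
Proof.
  induction n as [|n IH]; intros H; cbn [sumC].
  - split. apply (ex_RInt_const (V := C_R_NormedModule)). rewrite CRInt_const. ring.
  - destruct IH as [E1 E2]; [intros; apply H; lia|].
    assert (E3 : ex_RInt (h (S n)) a b) by (apply H; lia).
    split. apply (ex_RInt_plus (V := C_R_NormedModule)); auto.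
    rewrite CRInt_plus, E2; auto.
Qed.

Lemma lipschitz_continuous (f : R -> C) z K a b : a < z < b -> 0 <= K ->
  (forall t, a <= t <= b -> Cmod (f t - f z) <= K * Rabs (t - z)) -> continuous f z.
Proof.
  intros Hz HK H. apply filterlim_locally. intro eps. pose proof (cond_pos eps).
  set (dl := Rmin (Rmin (z - a) (b - z)) (eps / (K + 1))).
  assert (Hd : 0 < dl).
  { apply Rmin_pos; [apply Rmin_pos; lra | apply Rdiv_lt_0_compat; lra]. }
  exists (mkposreal _ Hd). intros y Hy.
  change (Rabs (y - z) < dl) in Hy.
  apply (@norm_compat1 R_AbsRing C_R_NormedModule). rewrite <- Cmod_norm.
  change (minus (f y) (f z)) with (Cminus (f y) (f z)).
  assert (dl <= Rmin (z - a) (b - z)) by apply Rmin_l.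
  assert (dl <= eps / (K + 1)) by apply Rmin_r.
  pose proof (Rmin_l (z - a) (b - z)); pose proof (Rmin_r (z - a) (b - z)).
  apply Rabs_def2 in Hy as Hy'.
  eapply Rle_lt_trans. apply H; lra.
  assert (K * Rabs (y - z) <= K * (eps / (K + 1))) by (apply Rmult_le_compat_l; lra).
  assert (K * (eps / (K + 1)) < eps).
  { apply (Rmult_lt_reg_r (K + 1)); [lra|]. field_simplify; nra. }
  lra.
Qed.

Lemma ex_RInt_lipschitz (f : R -> C) lo hi a b K : lo < a -> a <= b -> b < hi -> 0 <= K ->
  (forall s t, lo <= s <= hi -> lo <= t <= hi -> Cmod (f s - f t) <= K * Rabs (s - t)) ->
  ex_RInt f a b.
Proof.
  intros. apply (ex_RInt_continuous (V := C_R_CompleteNormedModule)). intros z Hz.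
  rewrite Rmin_left, Rmax_right in Hz by lra.
  apply (lipschitz_continuous f z K lo hi); try lra. intros; apply H3; lra.
Qed.

(** * Iterated integrals over the unit cube *)

(* Lipschitz bounds are required on [-1,2]^n rather than [0,1]^n: slices are then
   Lipschitz on an open neighbourhood of [0,1] (which gives integrability), and
   Riemann blocks may overhang [0,1] by one step. *)
Definition in_wide_cube (u : nat -> R) := forall j, -1 <= u j <= 2.

Definition coord_lipschitz (K : R) (g : (nat -> R) -> C) :=
  0 <= K /\ forall u j t, in_wide_cube u -> -1 <= t <= 2 ->
    Cmod (g (upd u j t) - g u) <= K * Rabs (t - u j).

Lemma in_wide_cube_0 : in_wide_cube (fun _ => 0).
Proof. intro; lra. Qed.

Lemma in_wide_cube_upd u j t : in_wide_cube u -> -1 <= t <= 2 -> in_wide_cube (upd u j t).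
Proof. intros H Ht i. unfold upd. destruct (Nat.eqb i j); auto. Qed.

Lemma coord_lipschitz_upd K g i v : coord_lipschitz K g -> -1 <= v <= 2 ->
  coord_lipschitz K (fun u => g (upd u i v)).
Proof.
  intros [HK H] Hv. split; auto. intros u j t Hu Ht. destruct (Nat.eq_dec j i) as [->|Hji].
  - rewrite upd_upd_same, Cminus_diag, Cmod_0. pose proof (Rabs_pos (t - u i)). nra.
  - rewrite upd_comm by auto. rewrite <- (upd_neq u i v j Hji).
    apply H; auto. apply in_wide_cube_upd; auto.
Qed.

Lemma coord_lipschitz_slice K g x i t s : coord_lipschitz K g -> in_wide_cube x ->
  -1 <= t <= 2 -> -1 <= s <= 2 ->
  Cmod (g (upd x i t) - g (upd x i s)) <= K * Rabs (t - s).
Proof.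
  intros [_ H] Hx Ht Hs. pose proof (H (upd x i s) i t (in_wide_cube_upd _ _ _ Hx Hs) Ht) as E.
  rewrite upd_upd_same, upd_eq in E. exact E.
Qed.

Lemma coord_lipschitz_const c : coord_lipschitz 0 (fun _ => c).
Proof. split; [lra|]. intros. rewrite Cminus_diag, Cmod_0. lra. Qed.

Lemma cubeint_diff n : forall K1 K2 g1 g2 eps,
  coord_lipschitz K1 g1 -> coord_lipschitz K2 g2 ->
  (forall u, in_wide_cube u -> Cmod (g1 u - g2 u) <= eps) ->
  Cmod (cubeint n g1 - cubeint n g2) <= eps.
Proof.
  induction n as [|n IH]; intros K1 K2 g1 g2 eps H1 H2 H.
  - apply H, in_wide_cube_0.
  - assert (slice : forall K g, coord_lipschitz K g ->
             ex_RInt (fun t => cubeint n (fun x => g (upd x (S n) t))) 0 1).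
    { intros K g Hg. apply (ex_RInt_lipschitz _ (-1) 2 0 1 K); try lra; [apply Hg|].
      intros s t Hs Ht. apply (IH K K); try (apply coord_lipschitz_upd; auto).
      intros; apply coord_lipschitz_slice; auto. }
    cbn [cubeint]. rewrite <- CRInt_minus by (eapply slice; eauto).
    replace eps with ((1 - 0) * eps) by ring.
    apply Cmod_CRInt_le; [lra | apply (ex_RInt_minus (V := C_R_NormedModule)); eapply slice; eauto |].
    intros t Ht. apply (IH K1 K2); try (apply coord_lipschitz_upd; auto; lra).
    intros u Hu. apply H, in_wide_cube_upd; auto; lra.
Qed.

Lemma cubeint_slice_lipschitz n K g i : coord_lipschitz K g -> forall s t,
  -1 <= s <= 2 -> -1 <= t <= 2 ->
  Cmod (cubeint n (fun x => g (upd x i s)) - cubeint n (fun x => g (upd x i t)))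
  <= K * Rabs (s - t).
Proof.
  intros Hg s t Hs Ht. apply (cubeint_diff n K K); try (apply coord_lipschitz_upd; auto).
  intros; apply coord_lipschitz_slice; auto.
Qed.

Lemma ex_RInt_cubeint_slice n K g i : coord_lipschitz K g ->
  ex_RInt (fun t => cubeint n (fun x => g (upd x i t))) 0 1.
Proof.
  intros Hg. apply (ex_RInt_lipschitz _ (-1) 2 0 1 K); try lra; [apply Hg|].
  intros; apply cubeint_slice_lipschitz; auto.
Qed.

Lemma cubeint_const n : forall c, cubeint n (fun _ => c) = c.
Proof.
  induction n; intros; simpl; auto.
  rewrite (CRInt_ext _ (fun _ => c)) by (intros; apply IHn).
  rewrite CRInt_const. replace (1 - 0) with 1 by ring. ring.
Qed.

Lemma Cmod_cubeint_le n K g B : coord_lipschitz K g ->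
  (forall u, in_wide_cube u -> Cmod (g u) <= B) -> Cmod (cubeint n g) <= B.
Proof.
  intros Hg H. replace (cubeint n g) with (cubeint n g - cubeint n (fun _ => RtoC 0))%C
    by (rewrite cubeint_const; ring).
  apply (cubeint_diff n K 0); auto using coord_lipschitz_const.
  intros u Hu. replace (g u - 0)%C with (g u) by ring. auto.
Qed.

Lemma cubeint_scal n : forall K g c, coord_lipschitz K g ->
  cubeint n (fun u => c * g u)%C = (c * cubeint n g)%C.
Proof.
  induction n; intros K g c Hg; simpl; auto.
  rewrite (CRInt_ext _ (fun t => c * cubeint n (fun x => g (upd x (S n) t)))%C).
  - apply CRInt_Cmult, (ex_RInt_cubeint_slice n K), Hg.
  - intros t Ht. rewrite Rmin_left, Rmax_right in Ht by lra.
    apply (IHn K), coord_lipschitz_upd; auto; lra.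
Qed.

(** * One-dimensional Riemann sums *)

Definition lipschitz_on_wide (K : R) (phi : R -> C) :=
  forall v w, -1 <= v <= 2 -> -1 <= w <= 2 -> Cmod (phi v - phi w) <= K * Rabs (v - w).

Lemma ex_RInt_lipschitz_on_wide K phi a b : 0 <= K -> lipschitz_on_wide K phi ->
  -1 < a -> a <= b -> b < 2 -> ex_RInt phi a b.
Proof. intros. apply (ex_RInt_lipschitz _ (-1) 2 _ _ K); auto. Qed.

Lemma rectangle_rule_step (phi : R -> C) K A B : 0 <= K -> lipschitz_on_wide K phi ->
  -1 < A -> A <= B -> B < 2 ->
  Cmod (RtoC (B - A) * phi B - CRInt phi A B) <= K * (B - A) ^ 2.
Proof.
  intros HK HL HA HAB HB.
  assert (E : ex_RInt phi A B) by (apply (ex_RInt_lipschitz_on_wide K); auto).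
  rewrite <- CRInt_const, <- CRInt_minus; auto; [| apply (ex_RInt_const (V := C_R_NormedModule))].
  replace (K * (B - A) ^ 2) with ((B - A) * (K * (B - A))) by ring.
  apply Cmod_CRInt_le; auto.
  - apply (ex_RInt_minus (V := C_R_NormedModule)); auto. apply (ex_RInt_const (V := C_R_NormedModule)).
  - intros x Hx. eapply Rle_trans; [apply HL; lra|].
    apply Rmult_le_compat_l; auto. rewrite Rabs_right; lra.
Qed.

(* The nodes [b0 + h y], y < M, are the right endpoints of the cells of
   [b0 - h, b0 + h (M - 1)]. *)
Lemma rectangle_rule (phi : R -> C) K h b0 : 0 <= K -> 0 < h -> lipschitz_on_wide K phi ->
  forall M, -1 < b0 - h -> b0 + h * (INR M - 1) < 2 ->
  Cmod (RtoC h * sumC0 M (fun y => phi (b0 + h * INR y))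
        - CRInt phi (b0 - h) (b0 + h * (INR M - 1)))
  <= INR M * K * h ^ 2.
Proof.
  intros HK Hh HL. induction M as [|M IH]; intros H1 H2.
  - cbn [sumC0 INR]. replace (b0 + h * (0 - 1)) with (b0 - h) by ring.
    replace (CRInt phi (b0 - h) (b0 - h)) with (RtoC 0)
      by (unfold CRInt; rewrite RInt_point; reflexivity).
    replace (RtoC h * RtoC 0 - RtoC 0)%C with (RtoC 0) by ring. rewrite Cmod_0. lra.
  - pose proof (pos_INR M). rewrite S_INR in *.
    set (A := b0 + h * (INR M - 1)). set (B := b0 + h * (INR M + 1 - 1)).
    specialize (IH H1 ltac:(nra)). fold A in IH.
    rewrite (CRInt_Chasles _ _ A) by (apply (ex_RInt_lipschitz_on_wide K); auto; unfold A, B; nra).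
    cbn [sumC0]. replace (b0 + h * INR M) with B by (unfold B; ring).
    pose proof (rectangle_rule_step phi K A B HK HL ltac:(unfold A; nra) ltac:(unfold A, B; nra) H2)
      as Hstep.
    replace (B - A) with h in Hstep by (unfold A, B; ring).
    match goal with |- Cmod ?z <= _ => replace z with
      ((RtoC h * sumC0 M (fun y => phi (b0 + h * INR y)%R) - CRInt phi (b0 - h) A)
       + (RtoC h * phi B - CRInt phi A B))%C by ring end.
    eapply Rle_trans; [apply Cmod_triangle | lra].
Qed.

Lemma CRInt_move_bounds (phi : R -> C) K lo hi : 0 <= K -> lipschitz_on_wide K phi ->
  (forall v, -1 <= v <= 2 -> Cmod (phi v) <= 1) ->
  -1 < lo <= 0 -> 0 <= hi <= 1 ->
  Cmod (CRInt phi lo hi - CRInt phi 0 1) <= - lo + (1 - hi).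
Proof.
  intros HK HL HB Hlo Hhi.
  assert (Ex : forall a b, -1 < a -> a <= b -> b < 2 -> ex_RInt phi a b)
    by (intros; apply (ex_RInt_lipschitz_on_wide K); auto).
  rewrite (CRInt_Chasles phi lo 0 hi), (CRInt_Chasles phi 0 hi 1) by (apply Ex; lra).
  replace (CRInt phi lo 0 + CRInt phi 0 hi - (CRInt phi 0 hi + CRInt phi hi 1))%C
    with (CRInt phi lo 0 + - CRInt phi hi 1)%C by ring.
  eapply Rle_trans. apply Cmod_triangle. rewrite Cmod_opp.
  assert (Cmod (CRInt phi lo 0) <= (0 - lo) * 1)
    by (apply Cmod_CRInt_le; [lra | apply Ex; lra | intros; apply HB; lra]).
  assert (Cmod (CRInt phi hi 1) <= (1 - hi) * 1)
    by (apply Cmod_CRInt_le; [lra | apply Ex; lra | intros; apply HB; lra]).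
  lra.
Qed.

Lemma block_riemann (phi : R -> C) K (q P M s : nat) : 0 <= K ->
  (forall v, -1 <= v <= 2 -> Cmod (phi v) <= 1) -> lipschitz_on_wide K phi ->
  (1 <= q <= P)%nat -> (1 <= s <= q)%nat -> (q * M <= P < q * M + q)%nat ->
  Cmod (sumC0 M (fun y => phi (INR (q * y + s) / INR P))
        - RtoC (INR P / INR q) * CRInt phi 0 1) <= K + 3.
Proof.
  intros HK HB HL Hq Hs HM.
  assert (M1 : (1 <= M)%nat) by nia.
  assert (Hnat : (1 <= INR s <= INR q /\ INR q <= INR P /\ 1 <= INR M) /\
                 (INR q * INR M <= INR P /\ INR P + 1 <= INR q * INR M + INR q)).
  { rewrite <- !mult_INR, <- S_INR, <- plus_INR.
    repeat split; try apply (le_INR 1); try apply le_INR; lia. }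
  set (p := INR P) in *. set (ip := / p).
  assert (Hip : 0 < ip /\ p * ip = 1)
    by (split; [apply Rinv_0_lt_compat | apply Rinv_r]; lra).
  set (h := INR q * ip). set (b0 := INR s * ip).
  assert (Hh : 0 < h /\ INR M * h <= 1) by (unfold h; split; nra).
  assert (Hlo : -1 < b0 - h <= 0 /\ - (b0 - h) <= h) by (unfold b0, h; repeat split; nra).
  assert (Hhi : 0 <= b0 + h * (INR M - 1) <= 1 /\ 1 - (b0 + h * (INR M - 1)) <= 2 * h)
    by (unfold b0, h; repeat split; nra).
  rewrite (sumC0_ext M _ (fun y => phi (b0 + h * INR y))).
  2: { intros y _. f_equal. unfold b0, h, ip. rewrite plus_INR, mult_INR. unfold Rdiv. ring. }
  set (S0 := sumC0 M (fun y => phi (b0 + h * INR y))).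
  assert (Main : Cmod (RtoC h * S0 - CRInt phi 0 1) <= h * (K + 3)).
  { pose proof (rectangle_rule phi K h b0 HK (proj1 Hh) HL M ltac:(lra) ltac:(lra)) as RS.
    fold S0 in RS. pose proof (CRInt_move_bounds phi K (b0 - h) (b0 + h * (INR M - 1)) HK HL HB ltac:(lra) ltac:(lra)) as MB.
    replace (RtoC h * S0 - CRInt phi 0 1)%C
      with ((RtoC h * S0 - CRInt phi (b0 - h) (b0 + h * (INR M - 1)))
            + (CRInt phi (b0 - h) (b0 + h * (INR M - 1)) - CRInt phi 0 1))%C by ring.
    eapply Rle_trans. apply Cmod_triangle.
    assert (0 <= K * h * (1 - INR M * h)) by (apply Rmult_le_pos; [apply Rmult_le_pos|]; lra).
    nra. }
  replace (S0 - RtoC (p / INR q) * CRInt phi 0 1)%C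
    with (RtoC (/ h) * (RtoC h * S0 - CRInt phi 0 1))%C.
  2: { replace (p / INR q) with (/ h) by (unfold h, ip; field; lra).
       apply injective_projections; simpl; field; lra. }
  rewrite Cmod_RtoC_mult, Rabs_right by (apply Rle_ge, Rlt_le, Rinv_0_lt_compat; lra).
  apply (Rmult_le_reg_l h); [lra|]. rewrite <- Rmult_assoc, Rinv_r, Rmult_1_l by lra. exact Main.
Qed.

(* Sampling [t |-> psi t (t/P)] at t = 1..P, where [psi] is q-periodic on the
   integers in its first argument: grouping t by its residue mod q gives q
   Riemann sums with step q/P, plus an incomplete block of fewer than q terms. *)
Lemma periodic_riemann_sum (psi : R -> R -> C) K (q P : nat) : 0 <= K -> (1 <= q <= P)%nat ->
  (forall s v, -1 <= v <= 2 -> Cmod (psi s v) <= 1) ->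
  (forall (s : nat) v, psi (INR (s + q)) v = psi (INR s) v) ->
  (forall s, lipschitz_on_wide K (psi s)) ->
  Cmod (sumC P (fun t => psi (INR t) (INR t / INR P))
        - RtoC (INR P / INR q) * sumC q (fun s => CRInt (psi (INR s)) 0 1))
  <= INR q * (K + 4).
Proof.
  intros HK Hq HB Hper HL.
  assert (Pr : 1 <= INR P) by (apply (le_INR 1); lia).
  set (M := (P / q)%nat). set (r0 := (P mod q)%nat).
  assert (EP : P = (q * M + r0)%nat) by (apply Nat.div_mod; lia).
  assert (Hr0 : (r0 < q)%nat) by (apply Nat.mod_upper_bound; lia).
  set (w := fun t : nat => psi (INR t) (INR t / INR P)).
  assert (Hper_mul : forall y s v, psi (INR (q * y + s)) v = psi (INR s) v).
  { induction y; intros. rewrite Nat.mul_0_r. auto.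
    replace (q * S y + s)%nat with ((q * y + s) + q)%nat by lia. rewrite Hper. auto. }
  assert (Eblocks : sumC (q * M) w
          = sumC q (fun s => sumC0 M (fun y => psi (INR s) (INR (q * y + s) / INR P)))).
  { rewrite sumC_mul_blocks, <- sumC0_sumC_comm. apply sumC0_ext. intros y _.
    apply sumC_ext. intros s _. unfold w. rewrite Hper_mul. auto. }
  assert (Tail : Cmod (sumC r0 (fun i => w (q * M + i)%nat)) <= INR q).
  { eapply Rle_trans. apply (Cmod_sumC_le _ _ 1).
    - intros i Hi. unfold w. apply HB.
      assert (0 <= INR (q * M + i) <= INR P) by (split; [apply pos_INR | apply le_INR; lia]).
      split; [|apply Rle_div_l]; [apply Rle_trans with 0; [lra | apply Rdiv_le_0_compat] | |]; lra.
    - rewrite Rmult_1_r. apply le_INR. lia. }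
  assert (Blocks : Cmod (sumC q (fun s => sumC0 M (fun y => psi (INR s) (INR (q * y + s) / INR P)%R)
                   - RtoC (INR P / INR q) * CRInt (psi (INR s)) 0 1)%C) <= INR q * (K + 3)).
  { apply Cmod_sumC_le. intros s Hs. apply block_riemann; auto. lia. }
  replace (sumC P w) with (sumC (q * M) w + sumC r0 (fun i => w (q * M + i)%nat))%C
    by (rewrite <- sumC_add, <- EP; auto).
  rewrite Eblocks, <- sumC_scal.
  match goal with |- Cmod ?z <= _ => replace z with
    (sumC q (fun s => sumC0 M (fun y => psi (INR s) (INR (q * y + s) / INR P)%R)
                      - RtoC (INR P / INR q) * CRInt (psi (INR s)) 0 1)%C
     + sumC r0 (fun i => w (q * M + i)%nat))%C by (rewrite sumC_minus; ring) end.
  eapply Rle_trans; [apply Cmod_triangle | lra].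
Qed.

(** * Multidimensional Riemann sums *)

Definition div_point (P : nat) (x : nat -> R) : nat -> R := fun j => x j / INR P.

Lemma div_point_upd P x j a : div_point P (upd x j a) = upd (div_point P x) j (a / INR P).
Proof. apply functional_extensionality; intro i; unfold div_point, upd. destruct (Nat.eqb i j); auto. Qed.

Lemma INR_div_in_unit (t P : nat) : (1 <= P)%nat -> (t <= P)%nat -> -1 <= INR t / INR P <= 2.
Proof.
  intros HP Ht. assert (1 <= INR P) by (apply (le_INR 1); lia).
  assert (0 <= INR t <= INR P) by (split; [apply pos_INR | apply le_INR; lia]).
  split; [apply Rle_trans with 0; [lra | apply Rdiv_le_0_compat; lra] | apply Rle_div_l; lra].
Qed.

Section MultiRiemann.
Variables (q P : nat) (K : R).
Hypothesis HK : 0 <= K.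
Hypothesis Hq : (1 <= q <= P)%nat.

(* [Phi x u] stands for e(a/q f(x)) e(gamma f(u)): the first factor is q-periodic in
   each coordinate of the lattice point x, the second is evaluated at x/P. *)
Definition riemann_integrand (Phi : (nat -> R) -> (nat -> R) -> C) :=
  (forall x u, Cmod (Phi x u) <= 1) /\
  (forall x u j (s : nat), nat_point x ->
     Phi (upd x j (INR (s + q))) u = Phi (upd x j (INR s)) u) /\
  (forall x, coord_lipschitz K (Phi x)).

Lemma riemann_integrand_upd Phi j (t : nat) : riemann_integrand Phi -> (t <= P)%nat ->
  riemann_integrand (fun x u => Phi (upd x j (INR t)) (upd u j (INR t / INR P))).
Proof.
  intros (HB & Hper & HN) Ht. split; [|split].
  - intros; apply HB.
  - intros x u i s Hx. destruct (Nat.eq_dec i j) as [->|].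
    + rewrite !upd_upd_same. auto.
    + rewrite !(upd_comm x i j) by auto. apply Hper, nat_point_upd, Hx.
  - intros x. apply coord_lipschitz_upd; auto. apply INR_div_in_unit; lia.
Qed.

Lemma last_coordinate_riemann m Phi : riemann_integrand Phi ->
  Cmod (sumC P (fun t => boxsum q m (fun z =>
          cubeint m (fun u => Phi (upd z (S m) (INR t)) (upd u (S m) (INR t / INR P)))))
        - RtoC (INR P / INR q) * boxsum q (S m) (fun z => cubeint (S m) (Phi z)))
  <= INR q ^ m * (INR q * (K + 4)).
Proof.
  intros (HB & Hper & HN).
  set (psi := fun z s v => cubeint m (fun u => Phi (upd z (S m) s) (upd u (S m) v))).
  replace (boxsum q (S m) (fun z => cubeint (S m) (Phi z)))
    with (boxsum q m (fun z => sumC q (fun s => CRInt (psi z (INR s)) 0 1)))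
    by (cbn [boxsum]; rewrite <- boxsum_sumC; reflexivity).
  rewrite <- boxsum_sumC, <- boxsum_scal, <- boxsum_minus.
  apply Cmod_boxsum_le. intros z Hz. apply (periodic_riemann_sum (psi z) K q P); auto.
  - intros s v Hv. apply (Cmod_cubeint_le m K); [apply coord_lipschitz_upd|]; auto.
  - intros s v. unfold psi. f_equal. apply functional_extensionality; intro u.
    apply Hper, (in_nat_box_nat_point q), Hz.
  - intros s v w Hv Hw. apply cubeint_slice_lipschitz; auto.
Qed.

Lemma multi_riemann m Phi : riemann_integrand Phi ->
  Cmod (boxsum P m (fun x => Phi x (div_point P x))
        - RtoC ((INR P / INR q) ^ m) * boxsum q m (fun z => cubeint m (Phi z)))
  <= INR m * INR q * INR P ^ m * (K + 4) / INR P.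
Proof.
  assert (Pr : 1 <= INR P) by (apply (le_INR 1); lia).
  assert (qr : 1 <= INR q) by (apply (le_INR 1); lia).
  set (c := INR P / INR q).
  assert (cpos : 0 < c) by (apply Rdiv_lt_0_compat; lra).
  revert Phi. induction m as [|m IH]; intros Phi HPhi.
  - cbn [boxsum cubeint]. replace (div_point P (fun _ => 0)) with (fun _ : nat => 0)
      by (apply functional_extensionality; intro; unfold div_point, Rdiv; ring).
    replace (_ - _)%C with (RtoC 0) by (simpl; ring). rewrite Cmod_0. simpl. lra.
  - set (Pt := fun (t : nat) x u => Phi (upd x (S m) (INR t)) (upd u (S m) (INR t / INR P))).
    set (Y := sumC P (fun t => RtoC (c ^ m) * boxsum q m (fun z => cubeint m (Pt t z)))%C).
    assert (XY : Cmod (boxsum P (S m) (fun x => Phi x (div_point P x)) - Y)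
                 <= INR P * (INR m * INR q * INR P ^ m * (K + 4) / INR P)).
    { replace (boxsum P (S m) (fun x => Phi x (div_point P x)))
        with (sumC P (fun t => boxsum P m (fun x => Pt t x (div_point P x)))).
      2: { cbn [boxsum]. apply sumC_ext. intros t _. apply boxsum_ext. intros x _.
           unfold Pt. rewrite div_point_upd. auto. }
      unfold Y. rewrite <- sumC_minus. apply Cmod_sumC_le. intros t Ht.
      apply IH, riemann_integrand_upd; auto; lia. }
    assert (YZ : Cmod (Y - RtoC (c ^ S m) * boxsum q (S m) (fun z => cubeint (S m) (Phi z)))
                 <= c ^ m * (INR q ^ m * (INR q * (K + 4)))).
    { unfold Y. rewrite sumC_scal. replace (c ^ S m) with (c ^ m * c) by (simpl; ring).
      rewrite RtoC_mult, <- Cmult_assoc, <- Cmult_minus_distr_l, Cmod_RtoC_mult.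
      rewrite Rabs_right by (apply Rle_ge, pow_le; lra).
      apply Rmult_le_compat_l; [apply pow_le; lra|].
      apply last_coordinate_riemann, HPhi. }
    eapply Rle_trans. apply (Cmod_sub_triangle _ Y).
    assert (Hcq : c ^ m * INR q ^ m = INR P ^ m)
      by (rewrite <- Rpow_mult_distr; unfold c; f_equal; field; lra).
    replace (INR (S m) * INR q * INR P ^ S m * (K + 4) / INR P)
      with (INR P * (INR m * INR q * INR P ^ m * (K + 4) / INR P)
            + (c ^ m * INR q ^ m) * (INR q * (K + 4)))
      by (rewrite Hcq, S_INR; simpl; field; lra).
    lra.
Qed.

End MultiRiemann.

(** * The form [f] *)

Lemma prodR_ext k (g1 g2 : nat -> R) : (forall i, g1 i = g2 i) -> prodR k g1 = prodR k g2.
Proof. induction k; simpl; intros H; auto. rewrite IHk, H; auto. Qed.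

Lemma prodR_scal k (a : R) (g : nat -> R) : prodR k (fun i => a * g i) = a ^ k * prodR k g.
Proof. induction k; simpl. ring. rewrite IHk. ring. Qed.

Lemma fd_homogeneous d s c (u : nat -> R) : fd d s (fun j => c * u j) = c ^ d * fd d s u.
Proof.
  unfold fd. pose proof (Nat.div2_odd d) as Hd. rewrite <- Nat.negb_even in Hd.
  destruct (Nat.even d); simpl in Hd; rewrite ?Nat.add_0_r in Hd.
  - rewrite (prodR_ext _ _ (fun i => c ^ 2 * (u (s + (2 * i - 1))%nat ^ 2 + u (s + 2 * i)%nat ^ 2)))
      by (intros; ring).
    rewrite prodR_scal, <- pow_mult. f_equal. f_equal. lia.
  - rewrite (prodR_ext _ _ (fun i => c ^ 2 * (u (s + 2 * i)%nat ^ 2 + u (s + (2 * i + 1))%nat ^ 2)))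
      by (intros; ring).
    rewrite prodR_scal, <- pow_mult.
    replace (c ^ d) with (c ^ (2 * Nat.div2 d) * c ^ 1) by (rewrite <- pow_add; f_equal; lia).
    ring.
Qed.

Lemma ff_homogeneous d c (u : nat -> R) : ff d (fun j => c * u j) = c ^ d * ff d u.
Proof. unfold ff. rewrite !fd_homogeneous, Rpow_mult_distr. ring. Qed.

Lemma ff_div_point d (P : nat) (x : nat -> R) : (1 <= P)%nat ->
  ff d x = INR P ^ d * ff d (div_point P x).
Proof.
  intros HP. rewrite <- ff_homogeneous. f_equal. apply functional_extensionality; intro j.
  unfold div_point. field. apply not_0_INR. lia.
Qed.

Definition bounded_coord_lipschitz (f : (nat -> R) -> R) := exists L B, 0 <= L /\ 0 <= B /\
  (forall u, in_wide_cube u -> Rabs (f u) <= B) /\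
  (forall u j t, in_wide_cube u -> -1 <= t <= 2 -> Rabs (f (upd u j t) - f u) <= L * Rabs (t - u j)).

Lemma bounded_coord_lipschitz_coord i : bounded_coord_lipschitz (fun u => u i).
Proof.
  exists 1, 2. repeat split; try lra.
  - intros u Hu. specialize (Hu i). apply Rabs_le. lra.
  - intros u j t Hu Ht. unfold upd. destruct (Nat.eqb_spec i j) as [->|]; [lra|].
    rewrite Rminus_diag, Rabs_R0. pose proof (Rabs_pos (t - u j)). lra.
Qed.

Lemma bounded_coord_lipschitz_const c : bounded_coord_lipschitz (fun _ => c).
Proof.
  exists 0, (Rabs c). repeat split; try lra; [apply Rabs_pos | intros; lra |].
  intros. rewrite Rminus_diag, Rabs_R0. lra.
Qed.

Lemma bounded_coord_lipschitz_plus f g : bounded_coord_lipschitz f -> bounded_coord_lipschitz g ->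
  bounded_coord_lipschitz (fun u => f u + g u).
Proof.
  intros (L1 & B1 & ? & ? & Hb1 & Hl1) (L2 & B2 & ? & ? & Hb2 & Hl2).
  exists (L1 + L2), (B1 + B2). repeat split; try lra.
  - intros u Hu. eapply Rle_trans. apply Rabs_triang.
    specialize (Hb1 u Hu). specialize (Hb2 u Hu). lra.
  - intros u j t Hu Ht.
    replace (f (upd u j t) + g (upd u j t) - (f u + g u))
      with ((f (upd u j t) - f u) + (g (upd u j t) - g u)) by ring.
    eapply Rle_trans. apply Rabs_triang.
    specialize (Hl1 u j t Hu Ht). specialize (Hl2 u j t Hu Ht). lra.
Qed.

Lemma bounded_coord_lipschitz_mult f g : bounded_coord_lipschitz f -> bounded_coord_lipschitz g ->
  bounded_coord_lipschitz (fun u => f u * g u).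
Proof.
  intros (L1 & B1 & ? & ? & Hb1 & Hl1) (L2 & B2 & ? & ? & Hb2 & Hl2).
  exists (B1 * L2 + B2 * L1), (B1 * B2). repeat split; try nra.
  - intros u Hu. rewrite Rabs_mult.
    apply Rmult_le_compat; auto using Rabs_pos.
  - intros u j t Hu Ht.
    replace (f (upd u j t) * g (upd u j t) - f u * g u) with
      (f (upd u j t) * (g (upd u j t) - g u) + g u * (f (upd u j t) - f u)) by ring.
    eapply Rle_trans. apply Rabs_triang. rewrite !Rabs_mult.
    assert (Hd : in_wide_cube (upd u j t)) by (apply in_wide_cube_upd; auto).
    pose proof (Rabs_pos (t - u j)).
    assert (Rabs (f (upd u j t)) * Rabs (g (upd u j t) - g u) <= B1 * (L2 * Rabs (t - u j)))
      by (apply Rmult_le_compat; auto using Rabs_pos).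
    assert (Rabs (g u) * Rabs (f (upd u j t) - f u) <= B2 * (L1 * Rabs (t - u j)))
      by (apply Rmult_le_compat; auto using Rabs_pos).
    nra.
Qed.

(* The two properties of integer polynomials that make e(a/q f(x)) q-periodic in
   each coordinate of x. *)
Definition lattice_congruent (f : (nat -> R) -> R) :=
  (forall x, nat_point x -> exists z : Z, f x = IZR z) /\
  (forall x j (s q : nat), nat_point x ->
     exists z : Z, f (upd x j (INR (s + q))) - f (upd x j (INR s)) = INR q * IZR z).

Lemma lattice_congruent_coord i : lattice_congruent (fun u => u i).
Proof.
  split.
  - intros x Hx. destruct (Hx i) as [k ->]. exists (Z.of_nat k). apply INR_IZR_INZ.
  - intros x j s q Hx. unfold upd. destruct (Nat.eqb i j).
    + exists 1%Z. rewrite plus_INR. simpl. ring.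
    + exists 0%Z. simpl. ring.
Qed.

Lemma lattice_congruent_const (z : Z) : lattice_congruent (fun _ => IZR z).
Proof. split; intros; [exists z | exists 0%Z; simpl]; ring. Qed.

Lemma lattice_congruent_plus f g : lattice_congruent f -> lattice_congruent g ->
  lattice_congruent (fun u => f u + g u).
Proof.
  intros [F1 F2] [G1 G2]. split.
  - intros x Hx. destruct (F1 x Hx) as [a Ha], (G1 x Hx) as [b Hb].
    exists (a + b)%Z. rewrite plus_IZR. lra.
  - intros x j s q Hx. destruct (F2 x j s q Hx) as [a Ha], (G2 x j s q Hx) as [b Hb].
    exists (a + b)%Z. rewrite plus_IZR. nra.
Qed.

Lemma lattice_congruent_mult f g : lattice_congruent f -> lattice_congruent g ->
  lattice_congruent (fun u => f u * g u).
Proof.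
  intros [F1 F2] [G1 G2]. split.
  - intros x Hx. destruct (F1 x Hx) as [a Ha], (G1 x Hx) as [b Hb].
    exists (a * b)%Z. rewrite mult_IZR. nra.
  - intros x j s q Hx. destruct (F2 x j s q Hx) as [a Ha], (G2 x j s q Hx) as [b Hb].
    destruct (F1 (upd x j (INR (s + q)))) as [c Hc]; [apply nat_point_upd; auto|].
    destruct (G1 (upd x j (INR s))) as [e He]; [apply nat_point_upd; auto|].
    exists (c * b + e * a)%Z. rewrite plus_IZR, !mult_IZR.
    set (f1 := f (upd x j (INR (s + q)))) in *. set (f0 := f (upd x j (INR s))) in *.
    set (g1 := g (upd x j (INR (s + q)))) in *. set (g0 := g (upd x j (INR s))) in *.
    replace (f1 * g1 - f0 * g0) with (f1 * (g1 - g0) + g0 * (f1 - f0)) by ring.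
    rewrite Ha, Hb, Hc, He. ring.
Qed.

Section Closure.
Variable good : ((nat -> R) -> R) -> Prop.
Hypothesis good_ext : forall f g, (forall u, f u = g u) -> good f -> good g.
Hypothesis good_coord : forall i, good (fun u => u i).
Hypothesis good_one : good (fun _ => 1).
Hypothesis good_minus_one : good (fun _ => -1).
Hypothesis good_plus : forall f g, good f -> good g -> good (fun u => f u + g u).
Hypothesis good_mult : forall f g, good f -> good g -> good (fun u => f u * g u).

Lemma good_pow f n : good f -> good (fun u => f u ^ n).
Proof. intros Hf. induction n; simpl; auto. Qed.

Lemma good_prodR k (G : nat -> (nat -> R) -> R) :
  (forall i, good (G i)) -> good (fun u => prodR k (fun i => G i u)).
Proof. intros H. induction k; simpl; auto. Qed.

Lemma good_ff d : good (ff d).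
Proof.
  assert (Hfd : forall s, good (fd d s)).
  { intro s. unfold fd. destruct (Nat.even d);
      [| apply good_mult; auto]; apply good_prodR; intro i; apply good_plus; apply good_pow; auto. }
  apply (good_ext (fun u => fd d 0 u + fd d d u + (fun _ => -1) u * u (2 * d + 1)%nat ^ d)).
  - intros u. unfold ff. ring.
  - apply good_plus; [apply good_plus; auto | apply good_mult; auto using good_pow].
Qed.
End Closure.

Lemma bounded_coord_lipschitz_ff d : bounded_coord_lipschitz (ff d).
Proof.
  apply good_ff; auto using bounded_coord_lipschitz_coord, bounded_coord_lipschitz_const,
    bounded_coord_lipschitz_plus, bounded_coord_lipschitz_mult.
  intros f g E (L & B & H). exists L, B. now setoid_rewrite <- E.
Qed.

Lemma lattice_congruent_ff d : lattice_congruent (ff d).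
Proof.
  apply good_ff; auto using lattice_congruent_coord, lattice_congruent_plus, lattice_congruent_mult.
  - intros f g E H. unfold lattice_congruent. now setoid_rewrite <- E.
  - apply (lattice_congruent_const 1).
  - apply (lattice_congruent_const (-1)).
Qed.

(** * Approximation of [F] on a major arc *)

Lemma coord_lipschitz_Cmult K g (c : C) : coord_lipschitz K g -> Cmod c <= 1 ->
  coord_lipschitz K (fun u => c * g u)%C.
Proof.
  intros [HK H] Hc. split; auto. intros u j t Hu Ht.
  rewrite <- Cmult_minus_distr_l, Cmod_mult.
  pose proof (Cmod_ge_0 c). pose proof (Cmod_ge_0 (g (upd u j t) - g u)).
  specialize (H u j t Hu Ht). nra.
Qed.

Definition Icube (d : nat) (gamma : R) : C := cubeint (2 * d + 1) (fun xi => ee (gamma * ff d xi)).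

Section MajorArc.
Variables (d : nat) (L B : R).
Hypothesis HL0 : 0 <= L.
Hypothesis HB0 : 0 <= B.
Hypothesis ff_bound : forall u, in_wide_cube u -> Rabs (ff d u) <= B.
Hypothesis ff_lip : forall u j t, in_wide_cube u -> -1 <= t <= 2 ->
  Rabs (ff d (upd u j t) - ff d u) <= L * Rabs (t - u j).

Lemma coord_lipschitz_ee (g : R) : coord_lipschitz (4 * PI * Rabs g * L) (fun u => ee (g * ff d u)).
Proof.
  pose proof PI_RGT_0. pose proof (Rabs_pos g). split; [apply Rmult_le_pos; nra|].
  intros u j t Hu Ht. eapply Rle_trans. apply ee_lipschitz.
  rewrite <- Rmult_minus_distr_l, Rabs_mult.
  specialize (ff_lip u j t Hu Ht). pose proof (Rabs_pos (ff d (upd u j t) - ff d u)).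
  assert (Rabs g * Rabs (ff d (upd u j t) - ff d u) <= Rabs g * (L * Rabs (t - u j)))
    by (apply Rmult_le_compat_l; auto).
  nra.
Qed.

Lemma Icube_lipschitz (g1 g2 : R) : Cmod (Icube d g1 - Icube d g2) <= 4 * PI * B * Rabs (g1 - g2).
Proof.
  apply (cubeint_diff _ _ _ _ _ _ (coord_lipschitz_ee g1) (coord_lipschitz_ee g2)).
  intros u Hu. eapply Rle_trans. apply ee_mult_lipschitz.
  pose proof PI_RGT_0. pose proof (Rabs_pos (g1 - g2)). specialize (ff_bound u Hu).
  apply Rmult_le_compat_r; auto. apply Rmult_le_compat_l; lra.
Qed.

Lemma ex_RInt_Icube_scaled (u a b : R) : 0 <= u -> a <= b ->
  ex_RInt (fun x => Icube d (u * x)) a b.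
Proof.
  intros Hu Hab. pose proof PI_RGT_0.
  apply (ex_RInt_lipschitz _ (a - 1) (b + 1) a b (4 * PI * B * u)); try lra.
  - apply Rmult_le_pos; nra.
  - intros s t _ _. eapply Rle_trans. apply Icube_lipschitz.
    rewrite <- Rmult_minus_distr_l, Rabs_mult, (Rabs_right u) by lra. lra.
Qed.

Lemma FF_lipschitz (P : nat) a1 a2 : (1 <= P)%nat ->
  Cmod (FF d P a1 - FF d P a2) <= INR P ^ (2 * d + 1) * (4 * PI * INR P ^ d * B) * Rabs (a1 - a2).
Proof.
  intros HP. unfold FF. rewrite <- boxsum_minus, Rmult_assoc. apply Cmod_boxsum_le.
  intros x Hx. eapply Rle_trans. apply ee_mult_lipschitz.
  pose proof PI_RGT_0. pose proof (Rabs_pos (a1 - a2)). pose proof (pow_le (INR P) d (pos_INR P)).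
  apply Rmult_le_compat_r; auto.
  replace (4 * PI * INR P ^ d * B) with (4 * PI * (INR P ^ d * B)) by ring.
  apply Rmult_le_compat_l; [lra|].
  rewrite (ff_div_point d P x HP), Rabs_mult, Rabs_right by lra.
  apply Rmult_le_compat_l; auto. apply ff_bound.
  intro j. destruct (Hx j) as [k [Hk E]]. unfold div_point. rewrite E. apply INR_div_in_unit; auto.
Qed.

Lemma ex_RInt_FF_shifted (P : nat) c0 a b : (1 <= P)%nat -> a <= b ->
  ex_RInt (fun x => FF d P (c0 + x)) a b.
Proof.
  intros HP Hab. pose proof PI_RGT_0.
  pose proof (pow_le (INR P) d (pos_INR P)). pose proof (pow_le (INR P) (2 * d + 1) (pos_INR P)).
  apply (ex_RInt_lipschitz _ (a - 1) (b + 1) a b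
           (INR P ^ (2 * d + 1) * (4 * PI * INR P ^ d * B))); try lra.
  - apply Rmult_le_pos; auto. apply Rmult_le_pos; nra.
  - intros s t _ _. eapply Rle_trans. apply FF_lipschitz; auto.
    replace (c0 + s - (c0 + t)) with (s - t) by ring. lra.
Qed.

Lemma FF_near_rational (P q a : nat) (beta : R) : (1 <= q <= P)%nat ->
  Cmod (FF d P (INR a / INR q + beta)
        - RtoC ((INR P / INR q) ^ (2 * d + 1)) * (SS d q a * Icube d (INR P ^ d * beta)))
  <= INR (2 * d + 1) * INR q * INR P ^ (2 * d + 1)
     * (4 * PI * Rabs (INR P ^ d * beta) * L + 4) / INR P.
Proof.
  intros Hq. set (g := INR P ^ d * beta).
  set (Phi := fun x u => (ee (INR a / INR q * ff d x) * ee (g * ff d u))%C).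
  replace (FF d P (INR a / INR q + beta)) with (boxsum P (2 * d + 1) (fun x => Phi x (div_point P x))).
  2: { apply boxsum_ext. intros x _. unfold Phi. rewrite <- ee_plus. f_equal.
       rewrite (ff_div_point d P x) by lia. unfold g. ring. }
  replace (SS d q a * Icube d g)%C with (boxsum q (2 * d + 1) (fun z => cubeint (2 * d + 1) (Phi z))).
  2: { unfold SS. rewrite Cmult_comm, <- boxsum_scal. apply boxsum_ext. intros x _.
       unfold Phi, Icube. rewrite (cubeint_scal _ _ _ _ (coord_lipschitz_ee g)).
       apply Cmult_comm. }
  apply multi_riemann; auto.
  - apply (coord_lipschitz_ee g).
  - split; [|split].
    + intros. unfold Phi. rewrite Cmod_mult, !Cmod_ee. lra.
    + intros x u j s Hx. unfold Phi. f_equal.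
      destruct (proj2 (lattice_congruent_ff d) x j s q Hx) as [z Hz].
      replace (INR a / INR q * ff d (upd x j (INR (s + q))))
        with (INR a / INR q * ff d (upd x j (INR s)) + IZR (Z.of_nat a * z)).
      * apply ee_plus_IZR.
      * rewrite mult_IZR, <- INR_IZR_INZ.
        replace (ff d (upd x j (INR (s + q)))) with (ff d (upd x j (INR s)) + INR q * IZR z) by lra.
        field. apply not_0_INR. lia.
    + intros x. apply coord_lipschitz_Cmult; [apply coord_lipschitz_ee | rewrite Cmod_ee; lra].
Qed.

Lemma arc_integral_approx (P q a : nat) (r : R) : (1 <= q <= P)%nat -> 0 < r ->
  Cmod (CRInt (FF d P) (INR a / INR q - r) (INR a / INR q + r)
        - RtoC (INR P ^ (d + 1)) * ((RtoC (/ INR q ^ (2 * d + 1)) * SS d q a) * JJ d (INR P ^ d * r)))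
  <= 2 * r * (INR (2 * d + 1) * INR q * INR P ^ (2 * d + 1)
              * (4 * PI * (INR P ^ d * r) * L + 4) / INR P).
Proof.
  intros Hq Hr. set (c0 := INR a / INR q). set (u := INR P ^ d).
  assert (Pr : 1 <= INR P) by (apply (le_INR 1); lia).
  assert (qr : 1 <= INR q) by (apply (le_INR 1); lia).
  assert (upos : 0 < u) by (apply pow_lt; lra).
  assert (EFs : ex_RInt (fun b => FF d P (c0 + b)) (-r) r) by (apply ex_RInt_FF_shifted; lia || lra).
  assert (EIs : ex_RInt (fun b => Icube d (u * b)) (-r) r) by (apply ex_RInt_Icube_scaled; lra).
  assert (EF : CRInt (FF d P) (c0 - r) (c0 + r) = CRInt (fun b => FF d P (c0 + b)) (-r) r).
  { unfold Rminus. rewrite <- CRInt_shift; [reflexivity|].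
    apply (ex_RInt_ext (fun x => FF d P (0 + x))); [intros; now rewrite Rplus_0_l |].
    apply (ex_RInt_FF_shifted P 0); lia || lra. }
  assert (EJ : JJ d (u * r) = (RtoC u * CRInt (fun b => Icube d (u * b)) (-r) r)%C).
  { unfold JJ. fold (Icube d). rewrite Ropp_mult_distr_r, <- CRInt_scale; [reflexivity | | exact EIs].
    apply (ex_RInt_ext (fun x => Icube d (1 * x))); [intros; now rewrite Rmult_1_l |].
    apply ex_RInt_Icube_scaled; nra. }
  assert (Eu : INR P ^ (d + 1) * / INR q ^ (2 * d + 1) * u = (INR P / INR q) ^ (2 * d + 1)).
  { unfold u, Rdiv. rewrite Rpow_mult_distr, pow_inv.
    replace (2 * d + 1)%nat with ((d + 1) + d)%nat by lia. rewrite !pow_add. ring. }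
  set (main := fun b => (RtoC ((INR P / INR q) ^ (2 * d + 1)) * (SS d q a * Icube d (u * b)))%C).
  assert (Emain : ex_RInt main (-r) r) by (apply ex_RInt_Cmult, ex_RInt_Cmult, EIs).
  replace (RtoC (INR P ^ (d + 1)) * ((RtoC (/ INR q ^ (2 * d + 1)) * SS d q a) * JJ d (u * r)))%C
    with (CRInt main (-r) r).
  2: { unfold main. rewrite CRInt_Cmult, CRInt_Cmult by (exact EIs || exact (ex_RInt_Cmult _ _ _ _ EIs)).
       rewrite EJ, <- Eu, !RtoC_mult. ring. }
  rewrite EF, <- CRInt_minus by (exact EFs || exact Emain).
  replace (2 * r) with (r - - r) by ring.
  apply Cmod_CRInt_le; [lra | apply (ex_RInt_minus (V := C_R_NormedModule)); [exact EFs | exact Emain] |].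
  intros b Hb. eapply Rle_trans. apply (FF_near_rational P q a b Hq).
  assert (Rabs (u * b) <= u * r)
    by (rewrite Rabs_mult, Rabs_right by lra; apply Rmult_le_compat_l; [lra | apply Rabs_le; lra]).
  pose proof PI_RGT_0.
  assert (0 <= INR (2 * d + 1) * INR q * INR P ^ (2 * d + 1))
    by (apply Rmult_le_pos; [apply Rmult_le_pos; apply pos_INR | apply pow_le, pos_INR]).
  unfold Rdiv. apply Rmult_le_compat_r; [apply Rlt_le, Rinv_0_lt_compat; lra|].
  apply Rmult_le_compat_l; auto.
  assert (4 * PI * Rabs (u * b) * L <= 4 * PI * (u * r) * L)
    by (apply Rmult_le_compat_r; auto; apply Rmult_le_compat_l; lra).
  fold u. lra.
Qed.

End MajorArc.

(** * Sums over reduced fractions *)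

Section CoprimeSum.
Variables (N : nat) (Q : R).

(* [frakS d Q] is such a sum, with N = Z.to_nat (up Q). *)
Definition coprime_sum (h : nat -> nat -> C) : C :=
  sumC N (fun q => if Rle_dec (INR q) Q then
    sumC q (fun a => if Nat.eqb (Nat.gcd a q) 1 then h q a else RtoC 0) else RtoC 0).

Lemma coprime_sum_ext h1 h2 :
  (forall q a, (1 <= a <= q)%nat -> (1 <= q <= N)%nat -> h1 q a = h2 q a) ->
  coprime_sum h1 = coprime_sum h2.
Proof.
  intros H. apply sumC_ext. intros q Hq. destruct (Rle_dec (INR q) Q); auto.
  apply sumC_ext. intros a Ha. destruct (Nat.eqb (Nat.gcd a q) 1); auto.
Qed.

Lemma coprime_sum_minus h1 h2 :
  coprime_sum (fun q a => h1 q a - h2 q a)%C = (coprime_sum h1 - coprime_sum h2)%C.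
Proof.
  unfold coprime_sum. rewrite <- sumC_minus. apply sumC_ext. intros q _.
  destruct (Rle_dec (INR q) Q); [|ring].
  rewrite <- sumC_minus. apply sumC_ext. intros a _. destruct (Nat.eqb (Nat.gcd a q) 1); auto. ring.
Qed.

Lemma coprime_sum_mult_r h (w : C) : coprime_sum (fun q a => h q a * w)%C = (coprime_sum h * w)%C.
Proof.
  unfold coprime_sum. rewrite Cmult_comm, <- sumC_scal. apply sumC_ext. intros q _.
  destruct (Rle_dec (INR q) Q); [|ring].
  rewrite <- sumC_scal. apply sumC_ext. intros a _. destruct (Nat.eqb (Nat.gcd a q) 1); ring.
Qed.

Lemma coprime_sum_mult_l h (w : C) : coprime_sum (fun q a => w * h q a)%C = (w * coprime_sum h)%C.
Proof.
  rewrite (coprime_sum_ext _ (fun q a => h q a * w)%C) by (intros; ring).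
  rewrite coprime_sum_mult_r. ring.
Qed.

Lemma Cmod_coprime_sum_le h M : 0 <= M -> 0 <= Q ->
  (forall q a, (1 <= q)%nat -> INR q <= Q -> (1 <= a <= q)%nat -> Cmod (h q a) <= M) ->
  Cmod (coprime_sum h) <= Q * (Q * M).
Proof.
  intros HM HQ H. unfold coprime_sum.
  apply Rle_trans with (Rmin (INR N) Q * (Q * M));
    [| apply Rmult_le_compat_r; [apply Rmult_le_pos|apply Rmin_r]; auto].
  induction N as [|n IH]; cbn [sumC].
  - rewrite Cmod_0, Rmin_left by (simpl; lra). simpl. lra.
  - eapply Rle_trans. apply Cmod_triangle.
    assert (Rmin (INR n) Q * (Q * M) <= Rmin (INR (S n)) Q * (Q * M))
      by (apply Rmult_le_compat_r; [apply Rmult_le_pos; auto | apply Rle_min_compat_r, le_INR; lia]).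
    destruct (Rle_dec (INR (S n)) Q) as [Hl | Hl]; [| rewrite Cmod_0; lra].
    rewrite (Rmin_left (INR (S n)) Q) by lra. rewrite S_INR in *.
    rewrite (Rmin_left (INR n) Q) in IH by lra.
    assert (Cmod (sumC (S n) (fun a => if Nat.eqb (Nat.gcd a (S n)) 1 then h (S n) a else RtoC 0))
            <= Q * M).
    { eapply Rle_trans. apply (Cmod_sumC_le _ _ M).
      - intros a Ha. destruct (Nat.eqb (Nat.gcd a (S n)) 1); [apply H; [lia | rewrite S_INR; lra | lia]|].
        rewrite Cmod_0; auto.
      - rewrite ?S_INR. apply Rmult_le_compat_r; auto. }
    cbn [sumC] in *. lra.
Qed.

Lemma CRInt_coprime_sum (G : nat -> nat -> R -> C) a b :
  (forall q k, (1 <= q <= N)%nat -> (1 <= k <= q)%nat -> ex_RInt (G q k) a b) ->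
  CRInt (fun x => coprime_sum (fun q k => G q k x)) a b = coprime_sum (fun q k => CRInt (G q k) a b).
Proof.
  intros H.
  assert (Hin : forall q, (1 <= q <= N)%nat ->
    ex_RInt (fun x => sumC q (fun k => if Nat.eqb (Nat.gcd k q) 1 then G q k x else RtoC 0)) a b /\
    CRInt (fun x => sumC q (fun k => if Nat.eqb (Nat.gcd k q) 1 then G q k x else RtoC 0)) a b
    = sumC q (fun k => if Nat.eqb (Nat.gcd k q) 1 then CRInt (G q k) a b else RtoC 0)).
  { intros q Hq. destruct (CRInt_sumC q (fun k x => if Nat.eqb (Nat.gcd k q) 1 then G q k x else RtoC 0) a b)
      as [E1 E2].
    - intros k Hk. destruct (Nat.eqb (Nat.gcd k q) 1); [apply H; auto |].
      apply (ex_RInt_const (V := C_R_NormedModule)).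
    - split; auto. rewrite E2. apply sumC_ext. intros k Hk.
      destruct (Nat.eqb (Nat.gcd k q) 1); auto. rewrite CRInt_const. ring. }
  unfold coprime_sum.
  destruct (CRInt_sumC N (fun q x => if Rle_dec (INR q) Q then
     sumC q (fun k => if Nat.eqb (Nat.gcd k q) 1 then G q k x else RtoC 0) else RtoC 0) a b)
    as [_ ->].
  - intros q Hq. destruct (Rle_dec (INR q) Q); [apply Hin; auto|].
    apply (ex_RInt_const (V := C_R_NormedModule)).
  - apply sumC_ext. intros q Hq. destruct (Rle_dec (INR q) Q); [apply Hin; auto|].
    rewrite CRInt_const. ring.
Qed.

End CoprimeSum.

Lemma ex_RInt_FF d P a b : (1 <= P)%nat -> a <= b -> ex_RInt (FF d P) a b.
Proof.
  intros HP Hab. destruct (bounded_coord_lipschitz_ff d) as (L & B & HL & HB & Hbnd & Hlip).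
  apply (ex_RInt_ext (fun x => FF d P (0 + x))); [intros; now rewrite Rplus_0_l |].
  apply (ex_RInt_FF_shifted d B); auto.
Qed.

(** * The major arcs *)

Lemma coprime_fraction_unique (a q a' q' : nat) : (1 <= q)%nat -> (1 <= q')%nat ->
  Nat.gcd a q = 1%nat -> Nat.gcd a' q' = 1%nat -> (a * q' = a' * q)%nat -> q = q' /\ a = a'.
Proof.
  intros Hq Hq' G1 G2 E.
  assert (D1 : Nat.divide q q')
    by (apply (Nat.gauss q a q'); [exists a'; lia | rewrite Nat.gcd_comm; auto]).
  assert (D2 : Nat.divide q' q)
    by (apply (Nat.gauss q' a' q); [exists a; lia | rewrite Nat.gcd_comm; auto]).
  assert (q = q') as <- by (apply Nat.divide_antisym; auto).
  split; auto. apply (Nat.mul_cancel_r a a' q); lia.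
Qed.

Lemma INR_eq_of_dist_lt_1 (x y : nat) : Rabs (INR x - INR y) < 1 -> x = y.
Proof.
  intros H. apply Rabs_def2 in H.
  destruct (lt_eq_lt_dec x y) as [[Hl|He]|Hl]; auto.
  - assert (INR x + 1 <= INR y) by (rewrite <- S_INR; apply le_INR; lia). lra.
  - assert (INR y + 1 <= INR x) by (rewrite <- S_INR; apply le_INR; lia). lra.
Qed.

(* Distinct reduced fractions with denominators at most Q are more than 1/Q^2 apart. *)
Lemma arcs_disjoint r Q al (q a q' a' : nat) : 2 * r * Q * Q < 1 ->
  (1 <= q)%nat -> INR q <= Q -> (1 <= q')%nat -> INR q' <= Q ->
  Nat.gcd a q = 1%nat -> Nat.gcd a' q' = 1%nat ->
  Rabs (al - INR a / INR q) <= r -> Rabs (al - INR a' / INR q') <= r -> q = q' /\ a = a'.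
Proof.
  intros HQ Hq HqQ Hq' Hq'Q G1 G2 H1 H2.
  assert (qr : 1 <= INR q) by (apply (le_INR 1); lia).
  assert (qr' : 1 <= INR q') by (apply (le_INR 1); lia).
  apply coprime_fraction_unique, INR_eq_of_dist_lt_1; auto. rewrite !mult_INR.
  replace (INR a * INR q' - INR a' * INR q)
    with (INR q * INR q' * (INR a / INR q - INR a' / INR q')) by (field; lra).
  rewrite Rabs_mult, Rabs_right by nra.
  apply Rabs_le_between' in H1. apply Rabs_le_between' in H2.
  assert (Rabs (INR a / INR q - INR a' / INR q') <= 2 * r) by (apply Rabs_le; lra).
  apply Rle_lt_trans with (Q * Q * (2 * r)); [| lra].
  apply Rmult_le_compat; try nra. apply Rabs_pos.
Qed.

Definition arc_ind (c r al : R) : C := RtoC (if Rle_dec (Rabs (al - c)) r then 1 else 0).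

Lemma CRInt_arc_ind (f : R -> C) A B c r : 0 < r -> A <= c - r -> c + r <= B ->
  ex_RInt f (c - r) (c + r) ->
  ex_RInt (fun x => arc_ind c r x * f x)%C A B /\
  CRInt (fun x => arc_ind c r x * f x)%C A B = CRInt f (c - r) (c + r).
Proof.
  intros Hr HA HB Hf. set (g := fun x => (arc_ind c r x * f x)%C).
  assert (Zero : forall x, Rabs (x - c) > r -> RtoC 0 = g x).
  { intros x Hx. unfold g, arc_ind. destruct (Rle_dec (Rabs (x - c)) r); [lra | ring]. }
  assert (Z1 : forall x, Rmin A (c - r) < x < Rmax A (c - r) -> RtoC 0 = g x).
  { intros x Hx. rewrite Rmin_left, Rmax_right in Hx by lra. apply Zero.
    rewrite Rabs_left; lra. }
  assert (Z2 : forall x, Rmin (c + r) B < x < Rmax (c + r) B -> RtoC 0 = g x).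
  { intros x Hx. rewrite Rmin_left, Rmax_right in Hx by lra. apply Zero.
    rewrite Rabs_right; lra. }
  assert (Z3 : forall x, Rmin (c - r) (c + r) < x < Rmax (c - r) (c + r) -> f x = g x).
  { intros x Hx. rewrite Rmin_left, Rmax_right in Hx by lra. unfold g, arc_ind.
    destruct (Rle_dec (Rabs (x - c)) r) as [|n]; [ring | exfalso; apply n, Rabs_le; lra]. }
  assert (X1 : ex_RInt g A (c - r))
    by (eapply ex_RInt_ext; [exact Z1 | apply (ex_RInt_const (V := C_R_NormedModule))]).
  assert (X2 : ex_RInt g (c + r) B)
    by (eapply ex_RInt_ext; [exact Z2 | apply (ex_RInt_const (V := C_R_NormedModule))]).
  assert (X3 : ex_RInt g (c - r) (c + r)) by (eapply ex_RInt_ext; [exact Z3 | exact Hf]).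
  assert (X13 : ex_RInt g A (c + r)) by (apply (ex_RInt_Chasles (V := C_R_NormedModule)) with (c - r); auto).
  split; [apply (ex_RInt_Chasles (V := C_R_NormedModule)) with (c + r); auto |].
  change (CRInt g A B = CRInt f (c - r) (c + r)).
  rewrite (CRInt_Chasles g A (c + r) B), (CRInt_Chasles g A (c - r) (c + r)) by auto.
  rewrite <- (CRInt_ext (fun _ => RtoC 0) g A (c - r)) by exact Z1.
  rewrite <- (CRInt_ext (fun _ => RtoC 0) g (c + r) B) by exact Z2.
  rewrite <- (CRInt_ext f g) by exact Z3.
  rewrite !CRInt_const. ring.
Qed.

Section MajorArcs.
Variables (d P : nat) (delta L B : R).
Hypothesis Hd : (1 <= d)%nat.
Hypothesis HP : (5 <= P)%nat.
Hypothesis Hdelta : 0 < delta < 1 / 6.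
Hypothesis HL0 : 0 <= L.
Hypothesis HB0 : 0 <= B.
Hypothesis ff_bound : forall u, in_wide_cube u -> Rabs (ff d u) <= B.
Hypothesis ff_lip : forall u j t, in_wide_cube u -> -1 <= t <= 2 ->
  Rabs (ff d (upd u j t) - ff d u) <= L * Rabs (t - u j).

Let Q := Rpower (INR P) delta.
Let r := Rpower (INR P) (delta - INR d).
Let N := Z.to_nat (up Q).

Let Pr : 5 <= INR P.
Proof. replace 5 with (INR 5) by (simpl; lra). apply le_INR; lia. Qed.

Lemma major_Q_bounds : 1 <= Q <= INR P.
Proof.
  pose proof Pr. assert (1 <= INR d) by (apply (le_INR 1); lia). unfold Q. split.
  - rewrite <- (Rpower_O (INR P)) by lra. apply Rle_Rpower; lra.
  - rewrite <- (Rpower_1 (INR P)) at 2 by lra. apply Rle_Rpower; lra.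
Qed.

Lemma major_r_pos : 0 < r.
Proof. apply exp_pos. Qed.

Lemma major_Q_eq : Q = INR P ^ d * r.
Proof.
  pose proof Pr. unfold Q, r. rewrite <- Rpower_pow, <- Rpower_plus by lra. f_equal. ring.
Qed.

Lemma major_arcs_small : 2 * r * Q * Q < 1.
Proof.
  pose proof Pr. assert (1 <= INR d) by (apply (le_INR 1); lia).
  assert (E : r * Q * Q = Rpower (INR P) (3 * delta - INR d))
    by (unfold Q, r; rewrite <- !Rpower_plus; f_equal; ring).
  assert (E2 : Rpower (INR P) (3 * delta - INR d) <= Rpower (INR P) (- / 2))
    by (apply Rle_Rpower; lra).
  rewrite Rpower_Ropp, Rpower_sqrt in E2 by lra.
  assert (2 < sqrt (INR P)) by (rewrite <- (sqrt_square 2) by lra; apply sqrt_lt_1_alt; lra).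
  assert (/ sqrt (INR P) < / 2) by (apply Rinv_lt_contravar; nra).
  lra.
Qed.

Lemma major_ind_as_arc_sum al :
  RtoC (major_ind d P delta al) = coprime_sum N Q (fun q a => arc_ind (INR a / INR q) r al).
Proof.
  pose proof major_arcs_small as Small.
  unfold major_ind. destruct (excluded_middle_informative _) as [Hm | Hm].
  - destruct Hm as (q0 & a0 & Hq0 & Hq0Q & Ha0 & G0 & Hal0). fold Q in Hq0Q. fold r in Hal0.
    assert (Hq0N : (q0 <= N)%nat).
    { unfold N. destruct (archimed Q) as [A1 _].
      assert (INR q0 < IZR (up Q)) as Hlt by lra. rewrite INR_IZR_INZ in Hlt. apply lt_IZR in Hlt. lia. }
    unfold coprime_sum. rewrite (sumC_single N _ q0); [| lia |].
    + destruct (Rle_dec (INR q0) Q) as [_ | ]; [| lra].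
      rewrite (sumC_single q0 _ a0); [| lia |].
      * rewrite G0. simpl. unfold arc_ind. destruct (Rle_dec _ r); [reflexivity | lra].
      * intros a Ha Hne. destruct (Nat.eqb_spec (Nat.gcd a q0) 1); auto. unfold arc_ind.
        destruct (Rle_dec _ r); [| reflexivity].
        exfalso. apply Hne, eq_sym, (arcs_disjoint r Q al q0 a0 q0 a); auto.
    + intros q Hq Hne. destruct (Rle_dec (INR q) Q); auto.
      apply sumC_eq0. intros a Ha. destruct (Nat.eqb_spec (Nat.gcd a q) 1); auto. unfold arc_ind.
      destruct (Rle_dec _ r); [| reflexivity].
      exfalso. apply Hne, eq_sym, (arcs_disjoint r Q al q0 a0 q a); auto; lia.
  - apply eq_sym, sumC_eq0. intros q Hq. destruct (Rle_dec (INR q) Q); auto.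
    apply sumC_eq0. intros a Ha. destruct (Nat.eqb_spec (Nat.gcd a q) 1); auto. unfold arc_ind.
    destruct (Rle_dec _ r); [| reflexivity].
    exfalso. apply Hm. exists q, a. repeat split; auto; lia.
Qed.

Lemma major_int_as_arc_sum :
  major_int d P delta
  = coprime_sum N Q (fun q a => CRInt (FF d P) (INR a / INR q - r) (INR a / INR q + r)).
Proof.
  pose proof major_r_pos.
  assert (Harc : forall q a : nat, (1 <= a <= q)%nat ->
            0 <= INR a / INR q <= 1 /\ ex_RInt (FF d P) (INR a / INR q - r) (INR a / INR q + r)).
  { intros q a Ha. assert (1 <= INR q) by (apply (le_INR 1); lia).
    assert (0 <= INR a <= INR q) by (split; [apply pos_INR | apply le_INR; lia]).
    split; [split; [apply Rdiv_le_0_compat | apply Rle_div_l]; lra |].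
    apply ex_RInt_FF; lia || lra. }
  unfold major_int. cbv zeta. fold r.
  rewrite (CRInt_ext _ (fun al => coprime_sum N Q (fun q a => arc_ind (INR a / INR q) r al * FF d P al)%C))
    by (intros; rewrite major_ind_as_arc_sum, <- coprime_sum_mult_r; reflexivity).
  rewrite CRInt_coprime_sum.
  - apply coprime_sum_ext. intros q a Ha Hq. destruct (Harc q a Ha).
    apply CRInt_arc_ind; auto; lra.
  - intros q a Hq Ha. destruct (Harc q a Ha). apply CRInt_arc_ind; auto; lra.
Qed.

Let arc_error := 2 * r * (INR (2 * d + 1) * Q * INR P ^ (2 * d + 1) * (4 * PI * Q * L + 4) / INR P).

Lemma arc_error_nonneg : 0 <= arc_error.
Proof.
  pose proof major_Q_bounds. pose proof major_r_pos. pose proof Pr. pose proof PI_RGT_0.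
  assert (0 <= INR (2 * d + 1)) by apply pos_INR.
  assert (0 <= INR P ^ (2 * d + 1)) by (apply pow_le; lra).
  assert (0 <= 4 * PI * Q * L) by (apply Rmult_le_pos; [apply Rmult_le_pos|]; lra).
  unfold arc_error, Rdiv. apply Rmult_le_pos; [lra|].
  apply Rmult_le_pos; [| apply Rlt_le, Rinv_0_lt_compat; lra].
  apply Rmult_le_pos; [apply Rmult_le_pos; [nra | auto] | lra].
Qed.

Lemma arc_error_le (q a : nat) : (1 <= q)%nat -> INR q <= Q ->
  Cmod (CRInt (FF d P) (INR a / INR q - r) (INR a / INR q + r)
        - RtoC (INR P ^ (d + 1)) * ((RtoC (/ INR q ^ (2 * d + 1)) * SS d q a) * JJ d Q))
  <= arc_error.
Proof.
  intros Hq HqQ. pose proof major_Q_bounds. pose proof major_r_pos. pose proof Pr. pose proof PI_RGT_0.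
  assert ((q <= P)%nat) by (apply INR_le; lra).
  rewrite major_Q_eq. eapply Rle_trans; [apply (arc_integral_approx d L B); auto; lia|].
  rewrite <- major_Q_eq. unfold arc_error, Rdiv.
  apply Rmult_le_compat_l; [lra|]. apply Rmult_le_compat_r; [apply Rlt_le, Rinv_0_lt_compat; lra|].
  assert (0 <= 4 * PI * Q * L) by (apply Rmult_le_pos; [apply Rmult_le_pos|]; lra).
  apply Rmult_le_compat_r; [lra|]. apply Rmult_le_compat_r; [apply pow_le; lra|].
  apply Rmult_le_compat_l; [apply pos_INR | lra].
Qed.

(* Q^2 arcs of length 2r = 2 P^(delta - d), each with error density O(Q^2 P^(2d)). *)
Lemma arc_error_total :
  Q * (Q * arc_error) <= 2 * INR (2 * d + 1) * (4 * PI * L + 4) * Rpower (INR P) (INR d + 5 * delta).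
Proof.
  pose proof major_Q_bounds. pose proof major_r_pos. pose proof Pr. pose proof PI_RGT_0.
  assert (Epow : INR P ^ (2 * d + 1) / INR P = INR P ^ d * INR P ^ d).
  { replace (2 * d + 1)%nat with (S (d + d)) by lia. simpl. rewrite pow_add. field. lra. }
  assert (Efin : r * (Q * (Q * (Q * Q))) * (INR P ^ d * INR P ^ d) = Rpower (INR P) (INR d + 5 * delta)).
  { unfold r, Q. rewrite <- !Rpower_pow by lra. rewrite <- !Rpower_plus. f_equal. ring. }
  assert (0 <= 4 * PI * L) by (apply Rmult_le_pos; lra).
  assert (H4 : 4 * PI * Q * L + 4 <= (4 * PI * L + 4) * Q) by nra.
  assert (0 <= r * (Q * (Q * Q)) * (INR P ^ d * INR P ^ d))
    by (apply Rmult_le_pos; [apply Rmult_le_pos; nra | apply Rmult_le_pos; apply pow_le; lra]).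
  assert (0 <= INR (2 * d + 1)) by apply pos_INR.
  unfold arc_error.
  replace (Q * (Q * (2 * r * (INR (2 * d + 1) * Q * INR P ^ (2 * d + 1) * (4 * PI * Q * L + 4) / INR P))))
    with (2 * INR (2 * d + 1) * (r * (Q * (Q * Q)) * (INR P ^ (2 * d + 1) / INR P)) * (4 * PI * Q * L + 4))
    by (field; lra).
  rewrite Epow, <- Efin.
  replace (2 * INR (2 * d + 1) * (4 * PI * L + 4) * (r * (Q * (Q * (Q * Q))) * (INR P ^ d * INR P ^ d)))
    with (2 * INR (2 * d + 1) * (r * (Q * (Q * Q)) * (INR P ^ d * INR P ^ d)) * ((4 * PI * L + 4) * Q))
    by ring.
  apply Rmult_le_compat_l; [nra | exact H4].
Qed.

Lemma major_arcs_error :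
  Cmod (major_int d P delta - RtoC (INR P ^ (d + 1)) * (frakS d Q * JJ d Q))
  <= 2 * INR (2 * d + 1) * (4 * PI * L + 4) * Rpower (INR P) (INR d + 5 * delta).
Proof.
  pose proof major_Q_bounds.
  rewrite major_int_as_arc_sum.
  change (frakS d Q) with (coprime_sum N Q (fun q a => RtoC (/ INR q ^ (2 * d + 1)) * SS d q a)%C).
  rewrite <- coprime_sum_mult_r, <- coprime_sum_mult_l, <- coprime_sum_minus.
  eapply Rle_trans; [| apply arc_error_total].
  apply Cmod_coprime_sum_le; [apply arc_error_nonneg | lra |].
  intros q a Hq HqQ _. apply arc_error_le; auto.
Qed.

End MajorArcs.

Theorem lemma3p2 :
  forall d : nat, (1 <= d)%nat ->
  exists delta0 : R, 0 < delta0 /\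
  exists C0 : R, 0 < C0 /\
  forall delta : R, 0 < delta < delta0 ->
  exists P0 : nat, forall P : nat, (P0 <= P)%nat ->
    Cmod (Cminus (major_int d P delta)
                 (Cmult (RtoC (INR P ^ (d + 1)))
                        (Cmult (frakS d (Rpower (INR P) delta))
                               (JJ d (Rpower (INR P) delta)))))
    <= C0 * Rpower (INR P) (INR d + 5 * delta).
Proof.
  intros d Hd.
  destruct (bounded_coord_lipschitz_ff d) as (L & B & HL & HB & ff_bound & ff_lip).
  exists (1 / 6). split; [lra|].
  exists (2 * INR (2 * d + 1) * (4 * PI * L + 4)). split.
  { pose proof PI_RGT_0. assert (1 <= INR (2 * d + 1)) by (apply (le_INR 1); lia).
    assert (0 <= 4 * PI * L) by (apply Rmult_le_pos; lra). nra. }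
  intros delta Hdelta. exists 5%nat. intros P HP.
  apply (major_arcs_error d P delta L B); auto.
Qed.
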